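(* Let $\mathcal{X}$ be a finite set, let $P_X$ be a pmf on $\mathcal{X}$ with $P_X(x)>0$ for all $x$, and let $R_X\neq P_X$ be a pmf on $\mathcal{X}$. Write $R_X=P_X+J_X=P_X+\mathrm{diag}(\sqrt{P_X})K_X$, i.e. $J_X=R_X-P_X$ and $K_X(x)=J_X(x)/\sqrt{P_X(x)}$. Then $$D(R_X\|P_X)\ge \frac{\|K_X\|_2^2\,\|J_X\|_1}{2\max_{x\in\mathcal{X}}\left|\frac{J_X(x)}{P_X(x)}\right|}.$$
   Context: $D(R_X\|P_X)=\sum_x R_X(x)\log(R_X(x)/P_X(x))$ is the KL divergence (natural log). $\mathrm{diag}(\sqrt{P_X})$ is the diagonal matrix with entries $\sqrt{P_X(x)}$. $\|\cdot\|_p$ denotes the $\ell^p$-norm. *)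

From mathcomp Require Import all_boot all_order all_algebra.
From mathcomp Require Import all_classical all_reals all_analysis.
Import Order.TTheory GRing.Theory Num.Theory.
Local Open Scope ring_scope.

Definition is_pmf {R : realType} {T : finType} (P : T -> R) : Prop :=
  (forall x, 0 <= P x) /\ \sum_(x : T) P x = 1.

Definition KL {R : realType} {T : finType} (Q P : T -> R) : R :=
  \sum_(x : T) (if Q x == 0 then 0 else Q x * ln (Q x / P x)).

Definition J_of {R : realType} {T : finType} (Q P : T -> R) (x : T) : R :=
  Q x - P x.

Definition K_of {R : realType} {T : finType} (Q P : T -> R) (x : T) : R :=
  J_of Q P x / Num.sqrt (P x).

Definition norm1 {R : realType} {T : finType} (f : T -> R) : R :=
  \sum_(x : T) `|f x|.

Definition norm2sq {R : realType} {T : finType} (f : T -> R) : R :=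
  \sum_(x : T) f x ^+ 2.

Definition maxabs {R : realType} {T : finType} (f : T -> R) : R :=
  \big[Num.max/0]_(x : T) `|f x|.

From mathcomp Require Import all_boot all_order all_algebra.
From mathcomp Require Import all_classical all_reals all_analysis.
From mathcomp Require Import ring lra.
Import Order.TTheory GRing.Theory Num.Theory.
Local Open Scope ring_scope.

(* The bound combines Pinsker's inequality D(R_X||P_X) >= ||J_X||_1^2 / 2 with
   ||K_X||_2^2 = sum_x |J_X(x) / P_X(x)| |J_X(x)| <= max_x |J_X(x) / P_X(x)| ||J_X||_1.
   Pinsker's inequality follows from the pointwise estimate
   q ln (q/p) - (q - p) >= 3/2 (q - p)^2 / (2p + q): summing it over x (the
   terms q - p sum to 0) gives D >= 3/2 sum_x J_X(x)^2 / (2 P_X(x) + R_X(x)),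
   and Cauchy-Schwarz with the weights 2 P_X + R_X, of total mass 3, bounds
   this from below by ||J_X||_1^2 / 2. *)

Section Pinsker.
Context {R : realType}.
Local Open Scope classical_set_scope.

Definition kl_summand (q p : R) : R := if q == 0 then 0 else q * ln (q / p).

(* [psi'(u) = (u - 1)^3 / (u^2 (u + 2)^2)]: the constants make the rational
   part agree with [ln] to third order at [u = 1], so [psi] is minimal there. *)
Let psi (u : R) : R := ln u + 4^-1 * u^-1 + 27 / 4 * (u + 2)^-1.

Let is_derive_psi (u : R) : 0 < u ->
  is_derive u 1 psi ((u - 1) ^+ 3 / (u ^+ 2 * (u + 2) ^+ 2)).
Proof.
move=> u0; have u2 : u + 2 != 0 by rewrite gt_eqF // addr_gt0.
apply: is_derive_eq.
  apply: is_deriveD; first apply: is_deriveD.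
  - exact: is_derive1_ln.
  - by apply: is_deriveZ; apply: is_deriveV; rewrite ?gt_eqF.
by rewrite /GRing.scale /= !mulr1 addr0; field; rewrite u2 gt_eqF.
Qed.

Lemma ln_ge_rational (u : R) : 0 < u ->
  5 / 2 - 4^-1 * u^-1 - 27 / 4 * (u + 2)^-1 <= ln u.
Proof.
move=> u0.
have psi1 : psi 1 = 5 / 2 by rewrite /psi ln1 invr1; field.
suff : psi 1 <= psi u by rewrite psi1 /psi; lra.
have dpsi x : 0 < x -> derivable psi x 1 by move=> /is_derive_psi [].
have psi' x : 0 < x -> derive1 psi x = (x - 1) ^+ 3 / (x ^+ 2 * (x + 2) ^+ 2).
  by move=> /is_derive_psi h; rewrite derive1E derive_val.
have den_ge0 (x : R) : 0 <= (x ^+ 2 * (x + 2) ^+ 2)^-1.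
  by rewrite invr_ge0 mulr_ge0 ?sqr_ge0.
have [u1|u1] := leP 1 u.
  apply: (ger0_derive1_le_cc (f := psi) (a := 1) (b := u) _ _ _ _ _ u1);
    try by rewrite in_itv /= lexx u1.
  - by move=> x; rewrite in_itv /= => /andP[x1 _]; apply: dpsi; lra.
  - move=> x; rewrite in_itv /= => /andP[x1 _].
    by rewrite psi' ?mulr_ge0 //; lra.
  - apply: derivable_within_continuous => x; rewrite in_itv /= => /andP[x1 _].
    by apply: dpsi; lra.
apply: (ler0_derive1_le_cc (f := psi) (a := u) (b := 1) _ _ _ _ _ (ltW u1));
  try by rewrite in_itv /= lexx ltW.
- by move=> x; rewrite in_itv /= => /andP[ux _]; apply: dpsi; lra.
- move=> x; rewrite in_itv /= => /andP[ux x1].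
  rewrite psi'; last by lra.
  by rewrite mulr_le0_ge0 // exprS mulr_le0_ge0 ?sqr_ge0 //; lra.
- apply: derivable_within_continuous => x; rewrite in_itv /= => /andP[ux _].
  by apply: dpsi; lra.
Qed.

Lemma kl_summand_ge (p q : R) : 0 < p -> 0 <= q ->
  3 / 2 * ((q - p) ^+ 2 / (2 * p + q)) <= kl_summand q p - (q - p).
Proof.
move=> p0; rewrite le_eqVlt => /predU1P[<-|q0].
  rewrite /kl_summand eqxx sub0r sqrrN opprK add0r addr0.
  have -> : p ^+ 2 / (2 * p) = p / 2 by field; rewrite gt_eqF.
  lra.
have qp0 : 0 < q / p by rewrite divr_gt0.
have := ln_ge_rational _ qp0; rewrite -(ler_pM2l q0).
rewrite /kl_summand gt_eqF // => h; apply: le_trans (lerD h (lexx _)).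
rewrite le_eqVlt; apply/predU1P; left.
by field; rewrite !gt_eqF //; lra.
Qed.

Lemma sqr_sum_abs_le {I : finType} (a w : I -> R) : (forall i, 0 < w i) ->
  (\sum_i `|a i|) ^+ 2 <= (\sum_i a i ^+ 2 / w i) * \sum_i w i.
Proof.
move=> w0; set N := \sum_i _; set S := \sum_i _; set W := \sum_i _.
have [W0|Wpos] := eqVneq W 0.
  have w_eq0 i : w i = 0 by apply: (psumr_eq0P _ W0) => // j _; apply: ltW.
  have N0 : N = 0 by apply: big1 => i _; have := w0 i; rewrite w_eq0 ltxx.
  by rewrite N0 W0 expr0n mulr0.
(* AM-GM termwise: [2 t |a| <= a^2 / w + t^2 w] for every [t]; take [t = N / W]. *)
have amgm (t : R) : 2 * t * N <= S + t ^+ 2 * W.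
  rewrite /N /S /W !mulr_sumr -big_split /=; apply: ler_sum => i _.
  have wi := w0 i; have -> : a i ^+ 2 = `|a i| ^+ 2 by rewrite real_normK ?num_real.
  have : 0 <= (`|a i| - t * w i) ^+ 2 / w i by rewrite divr_ge0 ?sqr_ge0 ?ltW.
  have -> : (`|a i| - t * w i) ^+ 2 / w i =
      `|a i| ^+ 2 / w i + t ^+ 2 * w i - 2 * t * `|a i|.
    by field; rewrite gt_eqF.
  lra.
have W0 : 0 < W by rewrite lt_def Wpos sumr_ge0 // => i _; rewrite ltW.
have := amgm (N / W).
have -> : 2 * (N / W) * N = 2 * (N ^+ 2 / W) by field; rewrite gt_eqF.
have -> : (N / W) ^+ 2 * W = N ^+ 2 / W by field; rewrite gt_eqF.
rewrite -ler_pdivrMr //; lra.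
Qed.

Context {T : finType}.

Lemma maxabs_ge0 (f : T -> R) : 0 <= maxabs f.
Proof. exact: bigmax_ge_id. Qed.

Lemma le_maxabs (f : T -> R) (x : T) : `|f x| <= maxabs f.
Proof. exact: le_bigmax. Qed.

Lemma norm2sq_K_of_le {P : T -> R} (Q : T -> R) : (forall x, 0 < P x) ->
  norm2sq (K_of Q P) <= maxabs (fun x => J_of Q P x / P x) * norm1 (J_of Q P).
Proof.
move=> P0; rewrite /norm2sq /norm1 mulr_sumr; apply: ler_sum => x _.
have Px := P0 x.
have -> : K_of Q P x ^+ 2 = `|J_of Q P x / P x| * `|J_of Q P x|.
  rewrite /K_of expr_div_n sqr_sqrtr ?ltW // -normrM ger0_norm.
    by rewrite expr2; field; rewrite gt_eqF.
  by rewrite mulrAC -expr2 divr_ge0 ?sqr_ge0 ?ltW.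
exact/ler_wpM2r/(le_maxabs (fun x => J_of Q P x / P x)).
Qed.

Theorem pinsker {P Q : T -> R} : is_pmf P -> (forall x, 0 < P x) -> is_pmf Q ->
  norm1 (J_of Q P) ^+ 2 / 2 <= KL Q P.
Proof.
move=> [_ P1] P0 [Q0 Q1].
have w0 x : 0 < 2 * P x + Q x by rewrite ltr_wpDr ?Q0 ?mulr_gt0.
have sum_w : \sum_x (2 * P x + Q x) = 3 by rewrite big_split /= -mulr_sumr P1 Q1; lra.
have sum_J : \sum_x J_of Q P x = 0 by rewrite sumrB P1 Q1 subrr.
have := sqr_sum_abs_le (J_of Q P) _ w0; rewrite sum_w -/(norm1 _) => CS.
suff : 3 / 2 * \sum_x J_of Q P x ^+ 2 / (2 * P x + Q x) <= KL Q P by lra.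
have -> : KL Q P = \sum_x (kl_summand (Q x) (P x) - J_of Q P x).
  by rewrite sumrB sum_J subr0.
rewrite mulr_sumr; apply: ler_sum => x _.
exact: kl_summand_ge.
Qed.

End Pinsker.

Theorem lemma1 (R : realType) (T : finType) (P Q : T -> R) :
  is_pmf P -> (forall x, 0 < P x) -> is_pmf Q -> Q <> P ->
  KL Q P >= norm2sq (K_of Q P) * norm1 (J_of Q P)
            / (2 * maxabs (fun x => J_of Q P x / P x)).
Proof.
move=> Ppmf P0 Qpmf _.
have KL_ge := pinsker Ppmf P0 Qpmf.
have K_le := norm2sq_K_of_le Q P0.
set N := norm1 _ in KL_ge K_le *; set M := maxabs _ in K_le *.
have N0 : 0 <= N by apply: sumr_ge0 => x _.
have [M0|M0] := eqVneq M 0.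
  by rewrite M0 mulr0 invr0 mulr0; apply: le_trans KL_ge; rewrite divr_ge0 ?sqr_ge0.
have Mpos : 0 < M by rewrite lt_def M0 maxabs_ge0.
rewrite ler_pdivrMr ?mulr_gt0 //.
have : norm2sq (K_of Q P) * N <= M * N * N by rewrite ler_wpM2r.
nra.
Qed.
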